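(* Let $I$ be a poset and $\mathcal{G}:I\to\mathsf{Grp}$ a functor to small groupoids with values $\mathcal{G}_i$ and, for $i\le j$, functors $\psi_{ij}:\mathcal{G}_i\to\mathcal{G}_j$. Let $\delta:\operatorname{2-colim}\mathcal{G}\to\operatorname{colim}\mathcal{G}$ be the canonical comparison functor. Then $\delta$ is an equivalence of categories if and only if the following holds: for every groupoid $\mathsf{D}$ and every pseudo-cocone $(\beta_i,\tau_{ij})$ on $\mathcal{G}$ with vertex $\mathsf{D}$ (functors $\beta_i:\mathcal{G}_i\to\mathsf{D}$ and natural isomorphisms $\tau_{ij}:\beta_j\psi_{ij}\Rightarrow\beta_i$ for $i\le j$ with $\tau_{ik}=\tau_{ij}\circ(\tau_{jk}\star\psi_{ij})$ for all $i\le j\le k$), there exist functors $\beta'_i:\mathcal{G}_i\to\mathsf{D}$ and natural transformations $\mu_i:\beta_i\Rightarrow\beta'_i$ such that $\beta'_i=\beta'_j\circ\psi_{ij}$ and $\tau_{ij}=\mu_i^{-1}\circ(\mu_j\star\psi_{ij})$ for all $i\le j$.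
   Context: For a functor $F$ and natural transformation $\alpha:G_1\Rightarrow G_2$, $\alpha\star F$ denotes the induced transformation $G_1F\Rightarrow G_2F$. The colimit $\operatorname{colim}\mathcal{G}$ is a groupoid with functors $\alpha_i:\mathcal{G}_i\to\operatorname{colim}\mathcal{G}$, $\alpha_i=\alpha_j\psi_{ij}$, universal in the strict sense: for every groupoid $\mathsf{D}$, composition with the $\alpha_i$ gives an isomorphism of groupoids from $\mathrm{Hom}(\operatorname{colim}\mathcal{G},\mathsf{D})$ to the groupoid of strict cocones (families $\beta_i$ with $\beta_i=\beta_j\psi_{ij}$, morphisms compatible families of natural transformations). The 2-colimit $\operatorname{2-colim}\mathcal{G}$ is a groupoid with functors $\alpha_i:\mathcal{G}_i\to\operatorname{2-colim}\mathcal{G}$ and natural isomorphisms $\lambda_{ij}:\alpha_j\psi_{ij}\Rightarrow\alpha_i$ satisfying $\lambda_{ik}=\lambda_{ij}\circ(\lambda_{jk}\star\psi_{ij})$, such that for every groupoid $\mathsf{D}$, the functor $\chi\mapsto(\chi\alpha_i,\chi\star\lambda_{ij})$ from $\mathrm{Hom}(\operatorname{2-colim}\mathcal{G},\mathsf{D})$ to the groupoid of pseudo-cocones with vertex $\mathsf{D}$ (morphisms: families of natural transformations $\theta_i:\beta_i\Rightarrow\beta''_i$ compatible with the $\tau_{ij}$) is an equivalence; it is unique up to equivalence. The comparison functor $\delta$ is the functor (determined up to isomorphism) corresponding, under this universal property, to the pseudo-cocone given by the colimit functors $\alpha_i:\mathcal{G}_i\to\operatorname{colim}\mathcal{G}$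 with identity transformations. *)

From mathcomp Require Import all_boot all_order.
Set Implicit Arguments.
Unset Strict Implicit.
Unset Printing Implicit Defensive.

(* Small groupoids, presented "arrows-only": a type of objects, a type  *)
(* of all morphisms with source/target maps, identities, composition    *)
(* (cmp g f = g o f, meaningful when src g = tgt f) and inverses.       *)
Record Groupoid := {
  obj : Type;
  mor : Type;
  src : mor -> obj;
  tgt : mor -> obj;
  idm : obj -> mor;
  cmp : mor -> mor -> mor;
  ginv : mor -> mor;
  src_id : forall x, src (idm x) = x;
  tgt_id : forall x, tgt (idm x) = x;
  src_cmp : forall g f, src g = tgt f -> src (cmp g f) = src f;
  tgt_cmp : forall g f, src g = tgt f -> tgt (cmp g f) = tgt g;
  cmp_id_l : forall f, cmp (idm (tgt f)) f = f;
  cmp_id_r : forall f, cmp f (idm (src f)) = f;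
  cmp_assoc : forall h g f, src h = tgt g -> src g = tgt f ->
                cmp h (cmp g f) = cmp (cmp h g) f;
  src_inv : forall f, src (ginv f) = tgt f;
  tgt_inv : forall f, tgt (ginv f) = src f;
  inv_l : forall f, cmp (ginv f) f = idm (src f);
  inv_r : forall f, cmp f (ginv f) = idm (tgt f)
}.

Record Functor (C D : Groupoid) := {
  fobj : obj C -> obj D;
  fmor : mor C -> mor D;
  fsrc : forall f, src (fmor f) = fobj (src f);
  ftgt : forall f, tgt (fmor f) = fobj (tgt f);
  fid : forall x, fmor (idm x) = idm (fobj x);
  fcmp : forall g f, src g = tgt f -> fmor (cmp g f) = cmp (fmor g) (fmor f)
}.

Definition idF (C : Groupoid) : Functor C C.
Proof.
refine (@Build_Functor C C (fun x => x) (fun f => f) _ _ _ _); by [].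
Defined.

Definition compF (B C D : Groupoid) (G : Functor C D) (F : Functor B C) :
  Functor B D.
Proof.
refine (@Build_Functor B D (fun x => fobj G (fobj F x))
          (fun f => fmor G (fmor F f)) _ _ _ _).
- by move=> f; rewrite fsrc fsrc.
- by move=> f; rewrite ftgt ftgt.
- by move=> x; rewrite fid fid.
- move=> g f h; rewrite fcmp // fcmp //.
  by rewrite fsrc ftgt h.
Defined.

Definition feq (C D : Groupoid) (F G : Functor C D) : Prop :=
  (forall x, fobj F x = fobj G x) /\ (forall f, fmor F f = fmor G f).

Definition is_nat (C D : Groupoid) (F G : Functor C D) (eta : obj C -> mor D)
  : Prop :=
  (forall x, src (eta x) = fobj F x /\ tgt (eta x) = fobj G x) /\
  (forall f, cmp (eta (tgt f)) (fmor F f) = cmp (fmor G f) (eta (src f))).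

Definition is_equivalence (C D : Groupoid) (F : Functor C D) : Prop :=
  exists (G : Functor D C) (eta : obj C -> mor C) (eps : obj D -> mor D),
    is_nat (compF G F) (idF C) eta /\ is_nat (compF F G) (idF D) eps.

Section Diagrams.
Variables (d : Order.disp_t) (I : porderType d) (G : I -> Groupoid)
  (psi : forall i j : I, (i <= j)%O -> Functor (G i) (G j)).

Definition is_diagram : Prop :=
  (forall i (h : (i <= i)%O), feq (psi h) (idF (G i))) /\
  (forall i j k (hij : (i <= j)%O) (hjk : (j <= k)%O) (hik : (i <= k)%O),
      feq (psi hik) (compF (psi hjk) (psi hij))).

Definition is_scocone (D : Groupoid) (beta : forall i, Functor (G i) D) : Prop :=
  forall i j (h : (i <= j)%O), feq (beta i) (compF (beta j) (psi h)).

Definition is_pcocone (D : Groupoid) (beta : forall i, Functor (G i) D)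
  (tau : forall i j : I, (i <= j)%O -> obj (G i) -> mor D) : Prop :=
  (forall i j (h : (i <= j)%O), is_nat (compF (beta j) (psi h)) (beta i) (tau i j h)) /\
  (forall i j k (hij : (i <= j)%O) (hjk : (j <= k)%O) (hik : (i <= k)%O) x,
      tau i k hik x = cmp (tau i j hij x) (tau j k hjk (fobj (psi hij) x))).

Definition pc_compat (D : Groupoid)
  (tau tau'' : forall i j : I, (i <= j)%O -> obj (G i) -> mor D)
  (theta : forall i, obj (G i) -> mor D) : Prop :=
  forall i j (h : (i <= j)%O) x,
    cmp (theta i x) (tau i j h x) = cmp (tau'' i j h x) (theta j (fobj (psi h) x)).

(* Strict colimit: composition with alpha is an isomorphism of groupoids
   Hom(L, D) -> strict cocones with vertex D (bijective on objects and
   on morphisms), for every groupoid D. *)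
Definition is_colimit (L : Groupoid) (alpha : forall i, Functor (G i) L) : Prop :=
  is_scocone alpha /\
  forall D : Groupoid,
    (forall beta : forall i, Functor (G i) D, is_scocone beta ->
       exists chi : Functor L D, forall i, feq (compF chi (alpha i)) (beta i)) /\
    (forall chi chi' : Functor L D,
       (forall i, feq (compF chi (alpha i)) (compF chi' (alpha i))) -> feq chi chi') /\
    (forall (chi chi' : Functor L D) (theta : forall i, obj (G i) -> mor D),
       (forall i, is_nat (compF chi (alpha i)) (compF chi' (alpha i)) (theta i)) ->
       (forall i j (h : (i <= j)%O) x, theta i x = theta j (fobj (psi h) x)) ->
       exists t, is_nat chi chi' t /\ forall i x, t (fobj (alpha i) x) = theta i x) /\
    (forall (chi chi' : Functor L D) (t t' : obj L -> mor D),
       is_nat chi chi' t -> is_nat chi chi' t' ->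
       (forall i x, t (fobj (alpha i) x) = t' (fobj (alpha i) x)) ->
       forall y, t y = t' y).

(* 2-colimit: chi |-> (chi alpha_i, chi * lambda_ij) is an equivalence
   Hom(C, D) -> pseudo-cocones with vertex D (essentially surjective,
   full and faithful), for every groupoid D. *)
Definition is_2colimit (C : Groupoid) (alpha : forall i, Functor (G i) C)
  (lambda : forall i j : I, (i <= j)%O -> obj (G i) -> mor C) : Prop :=
  is_pcocone alpha lambda /\
  forall D : Groupoid,
    (forall (beta : forall i, Functor (G i) D)
            (tau : forall i j : I, (i <= j)%O -> obj (G i) -> mor D),
       is_pcocone beta tau ->
       exists (chi : Functor C D) (theta : forall i, obj (G i) -> mor D),
         (forall i, is_nat (compF chi (alpha i)) (beta i) (theta i)) /\
         pc_compat (fun i j h x => fmor chi (lambda i j h x)) tau theta) /\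
    (forall (chi chi' : Functor C D) (theta : forall i, obj (G i) -> mor D),
       (forall i, is_nat (compF chi (alpha i)) (compF chi' (alpha i)) (theta i)) ->
       pc_compat (fun i j h x => fmor chi (lambda i j h x))
                 (fun i j h x => fmor chi' (lambda i j h x)) theta ->
       exists t, is_nat chi chi' t /\ forall i x, t (fobj (alpha i) x) = theta i x) /\
    (forall (chi chi' : Functor C D) (t t' : obj C -> mor D),
       is_nat chi chi' t -> is_nat chi chi' t' ->
       (forall i x, t (fobj (alpha i) x) = t' (fobj (alpha i) x)) ->
       forall y, t y = t' y).

(* delta : C -> L is (a choice of) the comparison functor: under the
   2-colimit universal property it corresponds, up to isomorphism of
   pseudo-cocones, to (alphaL_i, identities). *)
Definition is_comparison (C : Groupoid) (alphaC : forall i, Functor (G i) C)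
  (lambda : forall i j : I, (i <= j)%O -> obj (G i) -> mor C)
  (L : Groupoid) (alphaL : forall i, Functor (G i) L) (delta : Functor C L) : Prop :=
  exists theta : forall i, obj (G i) -> mor L,
    (forall i, is_nat (compF delta (alphaC i)) (alphaL i) (theta i)) /\
    pc_compat (fun i j h x => fmor delta (lambda i j h x))
              (fun i j h x => idm (fobj (alphaL i) x)) theta.

End Diagrams.

(* A pseudo-cocone is strictifiable exactly when it is isomorphic, as a
   pseudo-cocone, to a strict cocone with identity structure maps
   (pc_compat_idmP).  If delta has a quasi-inverse E, a pseudo-cocone
   (beta, tau) is induced by some chi out of the 2-colimit, and chi E applied to
   the strict colimit cocone is a strict cocone isomorphic to it, via the
   comparison isomorphisms kappa and the unit E delta ~ id.  Conversely,
   strictifying the universal pseudo-cocone (alphaC, lambda) yields a strict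
   cocone, hence E out of the colimit; the isomorphisms E delta ~ id and
   delta E ~ id then come from the fullness halves of the two universal
   properties, since the componentwise isomorphisms built from kappa and the
   strictification are compatible with the cocone structures. *)

From mathcomp Require Import all_boot all_order.
Set Implicit Arguments.
Unset Strict Implicit.
Unset Printing Implicit Defensive.

Section GroupoidTheory.
Variable X : Groupoid.
Implicit Types f g h : mor X.

Lemma ginv_unique f h : src h = tgt f -> cmp h f = idm (src f) -> h = ginv f.
Proof.
move=> hf hfE; have -> : h = cmp h (cmp f (ginv f)) by rewrite inv_r -hf cmp_id_r.
by rewrite cmp_assoc ?tgt_inv // hfE -(tgt_inv f) cmp_id_l.
Qed.

Lemma ginvK f : ginv (ginv f) = f.
Proof. by symmetry; apply: ginv_unique; rewrite ?tgt_inv // inv_r src_inv. Qed.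

Lemma cmpKg g f : src g = tgt f -> cmp (ginv g) (cmp g f) = f.
Proof. by move=> gf; rewrite cmp_assoc ?src_inv // inv_l gf cmp_id_l. Qed.

Lemma cmpKVg g f : tgt g = tgt f -> cmp g (cmp (ginv g) f) = f.
Proof. by move=> gf; rewrite -{1}(ginvK g) cmpKg // src_inv. Qed.

Lemma cmpgK g f : src g = tgt f -> cmp (cmp g f) (ginv f) = g.
Proof. by move=> gf; rewrite -cmp_assoc ?tgt_inv // inv_r -gf cmp_id_r. Qed.

End GroupoidTheory.

Lemma nat_src (C D : Groupoid) (F G : Functor C D) s x :
  is_nat F G s -> src (s x) = fobj F x.
Proof. by case=> /(_ x) []. Qed.

Lemma nat_tgt (C D : Groupoid) (F G : Functor C D) s x :
  is_nat F G s -> tgt (s x) = fobj G x.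
Proof. by case=> /(_ x) []. Qed.

Definition is_pcnat (d : Order.disp_t) (I : porderType d) (G : I -> Groupoid)
    (psi : forall i j : I, (i <= j)%O -> Functor (G i) (G j))
    (D : Groupoid) (beta : forall i, Functor (G i) D)
    (tau : forall i j : I, (i <= j)%O -> obj (G i) -> mor D) : Prop :=
  forall i j (h : (i <= j)%O), is_nat (compF (beta j) (psi i j h)) (beta i) (tau i j h).

Ltac endpoints :=
  repeat match goal with
  | |- context [src (cmp ?g ?f)] => rewrite (@src_cmp _ g f); last by endpoints
  | |- context [tgt (cmp ?g ?f)] => rewrite (@tgt_cmp _ g f); last by endpoints
  | |- context [src (ginv _)] => rewrite src_inv
  | |- context [tgt (ginv _)] => rewrite tgt_inv
  | |- context [src (idm _)] => rewrite src_id
  | |- context [tgt (idm _)] => rewrite tgt_id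
  | |- context [src (fmor _ _)] => rewrite fsrc
  | |- context [tgt (fmor _ _)] => rewrite ftgt
  | H : is_nat _ _ ?s |- context [src (?s ?x)] => rewrite (nat_src x H)
  | H : is_nat _ _ ?s |- context [tgt (?s ?x)] => rewrite (nat_tgt x H)
  | H : forall i, is_nat _ _ (?s i) |- context [src (?s ?i ?x)] =>
      rewrite (nat_src x (H i))
  | H : forall i, is_nat _ _ (?s i) |- context [tgt (?s ?i ?x)] =>
      rewrite (nat_tgt x (H i))
  | H : is_pcnat _ _ ?s |- context [src (?s ?i ?j ?h ?x)] =>
      rewrite (nat_src x (H i j h))
  | H : is_pcnat _ _ ?s |- context [tgt (?s ?i ?j ?h ?x)] =>
      rewrite (nat_tgt x (H i j h))
  end; done.

Section NaturalTransformations.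
Variables C D : Groupoid.
Implicit Types F G H : Functor C D.

Lemma is_nat_feqr F G G' s : feq G' G -> is_nat F G s -> is_nat F G' s.
Proof.
by move=> [G1 G2] [Hends Hnat]; split=> [x|f]; rewrite ?G1 ?G2.
Qed.

Lemma is_nat_comp F G H s t :
  is_nat F G s -> is_nat G H t -> is_nat F H (fun x => cmp (t x) (s x)).
Proof.
move=> Hs Ht; split=> [x|f]; first by split; endpoints.
rewrite -cmp_assoc; try endpoints.
rewrite Hs.2 cmp_assoc; try endpoints.
by rewrite Ht.2 -cmp_assoc; endpoints.
Qed.

Lemma is_nat_inv F G s : is_nat F G s -> is_nat G F (fun x => ginv (s x)).
Proof.
move=> Hs; split=> [x|f]; first by split; endpoints.
rewrite -[fmor F f](@cmpKg _ (s (tgt f))); try endpoints.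
by rewrite Hs.2 -cmp_assoc ?cmpgK; endpoints.
Qed.

End NaturalTransformations.

Lemma is_nat_lwhisker (B C D : Groupoid) (K : Functor C D) (F G : Functor B C) s :
  is_nat F G s -> is_nat (compF K F) (compF K G) (fun x => fmor K (s x)).
Proof.
move=> Hs; split=> [x|f] /=; first by split; endpoints.
by rewrite -!fcmp ?Hs.2; endpoints.
Qed.

Lemma is_nat_rwhisker (B C D : Groupoid) (P : Functor B C) (F G : Functor C D) s :
  is_nat F G s -> is_nat (compF F P) (compF G P) (fun x => s (fobj P x)).
Proof.
move=> Hs; split=> [x|f] /=; first exact: Hs.1.
by have := Hs.2 (fmor P f); rewrite fsrc ftgt.
Qed.

Section PseudoCocones.
Variables (d : Order.disp_t) (I : porderType d) (G : I -> Groupoid)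
  (psi : forall i j : I, (i <= j)%O -> Functor (G i) (G j)) (D D' : Groupoid).
Implicit Types (beta : forall i, Functor (G i) D)
  (tau : forall i j : I, (i <= j)%O -> obj (G i) -> mor D)
  (theta : forall i, obj (G i) -> mor D).

Lemma is_pcnat_lwhisker (K : Functor D D') beta tau :
  is_pcnat psi beta tau ->
  is_pcnat psi (fun i => compF K (beta i)) (fun i j h x => fmor K (tau i j h x)).
Proof. by move=> Ht i j h; exact (is_nat_lwhisker K (Ht i j h)). Qed.

Lemma is_scocone_lcomp (K : Functor D D') beta :
  is_scocone psi beta -> is_scocone psi (fun i => compF K (beta i)).
Proof. by move=> Hb i j h; split=> [x|f] /=; rewrite ?(Hb i j h).1 ?(Hb i j h).2. Qed.

Lemma is_pcnat_idm beta :
  is_scocone psi beta -> is_pcnat psi beta (fun i j h x => idm (fobj (beta i) x)).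
Proof.
move=> Hb i j h; split=> [x|f]; first by rewrite src_id tgt_id (Hb i j h).1.
by rewrite (Hb i j h).2 !(Hb i j h).1 -ftgt -fsrc cmp_id_l cmp_id_r.
Qed.

Lemma pc_compat_comp beta beta' beta'' tau tau' tau'' theta theta' :
  is_pcnat psi beta tau -> is_pcnat psi beta' tau' -> is_pcnat psi beta'' tau'' ->
  (forall i, is_nat (beta i) (beta' i) (theta i)) ->
  (forall i, is_nat (beta' i) (beta'' i) (theta' i)) ->
  pc_compat psi tau tau' theta -> pc_compat psi tau' tau'' theta' ->
  pc_compat psi tau tau'' (fun i x => cmp (theta' i x) (theta i x)).
Proof.
move=> Ht Ht' Ht'' Hth Hth' c c' i j h x.
rewrite -cmp_assoc; try endpoints.
rewrite c cmp_assoc; try endpoints.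
by rewrite c' -cmp_assoc; endpoints.
Qed.

Lemma pc_compat_inv beta beta' tau tau' theta :
  is_pcnat psi beta tau -> is_pcnat psi beta' tau' ->
  (forall i, is_nat (beta i) (beta' i) (theta i)) ->
  pc_compat psi tau tau' theta ->
  pc_compat psi tau' tau (fun i x => ginv (theta i x)).
Proof.
move=> Ht Ht' Hth c i j h x.
rewrite -[tau' i j h x](@cmpgK _ _ (theta j (fobj (psi h) x))); try endpoints.
by rewrite -c -cmp_assoc ?cmpKg; endpoints.
Qed.

Lemma pc_compat_lwhisker (K : Functor D D') beta beta' tau tau' theta :
  is_pcnat psi beta tau -> is_pcnat psi beta' tau' ->
  (forall i, is_nat (beta i) (beta' i) (theta i)) ->
  pc_compat psi tau tau' theta ->
  pc_compat psi (fun i j h x => fmor K (tau i j h x))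
    (fun i j h x => fmor K (tau' i j h x)) (fun i x => fmor K (theta i x)).
Proof. by move=> Ht Ht' Hth c i j h x; rewrite -!fcmp ?c; endpoints. Qed.

Lemma pc_compat_nat (C : Groupoid) (alpha : forall i, Functor (G i) C)
    (lambda : forall i j : I, (i <= j)%O -> obj (G i) -> mor C)
    (F F' : Functor C D) (eta : obj C -> mor D) :
  is_pcnat psi alpha lambda -> is_nat F F' eta ->
  pc_compat psi (fun i j h x => fmor F (lambda i j h x))
    (fun i j h x => fmor F' (lambda i j h x)) (fun i x => eta (fobj (alpha i) x)).
Proof.
move=> Hl Heta i j h x; have := Heta.2 (lambda i j h x).
by rewrite (nat_tgt _ (Hl i j h)) (nat_src _ (Hl i j h)).
Qed.

Lemma pc_compat_idmP beta beta' tau mu :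
  is_scocone psi beta' -> is_pcnat psi beta tau ->
  (forall i, is_nat (beta i) (beta' i) (mu i)) ->
  pc_compat psi tau (fun i j h x => idm (fobj (beta' i) x)) mu <->
  (forall i j h x, tau i j h x = cmp (ginv (mu i x)) (mu j (fobj (psi h) x))).
Proof.
move=> Hb' Ht Hmu.
have idmE i j h x : cmp (idm (fobj (beta' i) x)) (mu j (fobj (psi h) x))
                    = mu j (fobj (psi h) x).
  by rewrite (Hb' i j h).1 /= -(nat_tgt _ (Hmu j)) cmp_id_l.
split=> c i j h x.
  by rewrite -idmE -c cmpKg; endpoints.
by rewrite idmE c cmpKVg // !(nat_tgt _ (Hmu _)) (Hb' i j h).1.
Qed.

Lemma pc_compat_idm_const beta beta' theta :
  is_scocone psi beta' ->
  (forall i, is_nat (beta i) (beta' i) (theta i)) ->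
  pc_compat psi (fun i j h x => idm (fobj (beta i) x))
    (fun i j h x => idm (fobj (beta' i) x)) theta ->
  forall i j h x, theta i x = theta j (fobj (psi h) x).
Proof.
move=> Hb' Hth c i j h x; have := c i j h x.
by rewrite -(nat_src _ (Hth i)) cmp_id_r (Hb' i j h).1 /= -(nat_tgt _ (Hth j)) cmp_id_l.
Qed.

Lemma pc_compat_lwhisker_idm (K : Functor D D') beta beta' tau theta :
  is_pcnat psi beta tau -> is_scocone psi beta' ->
  (forall i, is_nat (beta i) (beta' i) (theta i)) ->
  pc_compat psi tau (fun i j h x => idm (fobj (beta' i) x)) theta ->
  pc_compat psi (fun i j h x => fmor K (tau i j h x))
    (fun i j h x => idm (fobj K (fobj (beta' i) x))) (fun i x => fmor K (theta i x)).
Proof.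
move=> Ht Hb' Hth c i j h x; rewrite -fid.
exact: pc_compat_lwhisker Ht (is_pcnat_idm Hb') Hth c i j h x.
Qed.

End PseudoCocones.

Definition strictifiable (d : Order.disp_t) (I : porderType d) (G : I -> Groupoid)
    (psi : forall i j : I, (i <= j)%O -> Functor (G i) (G j))
    (D : Groupoid) (beta : forall i, Functor (G i) D)
    (tau : forall i j : I, (i <= j)%O -> obj (G i) -> mor D) : Prop :=
  exists (beta' : forall i, Functor (G i) D) (mu : forall i, obj (G i) -> mor D),
    (forall i, is_nat (beta i) (beta' i) (mu i)) /\ is_scocone psi beta' /\
    (forall i j (h : (i <= j)%O) x,
       tau i j h x = cmp (ginv (mu i x)) (mu j (fobj (psi i j h) x))).

Section Comparison.
Variables (d : Order.disp_t) (I : porderType d) (G : I -> Groupoid)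
  (psi : forall i j : I, (i <= j)%O -> Functor (G i) (G j))
  (C : Groupoid) (alphaC : forall i, Functor (G i) C)
  (lambda : forall i j : I, (i <= j)%O -> obj (G i) -> mor C)
  (L : Groupoid) (alphaL : forall i, Functor (G i) L)
  (delta : Functor C L).

Lemma strictifiable_comparison_equivalence :
  is_2colimit psi alphaC lambda -> is_colimit psi alphaL ->
  is_comparison psi alphaC lambda alphaL delta ->
  strictifiable psi alphaC lambda -> is_equivalence delta.
Proof.
move=> [Hpc H2] [HL Hcol] [kappa [Hk Kc]] [beta' [mu [Hmu [Hb' Hlam]]]].
have [E HE] := (Hcol C).1 beta' Hb'.
have HEL := is_scocone_lcomp E HL.
have Hmu' i : is_nat (alphaC i) (compF E (alphaL i)) (mu i) := is_nat_feqr (HE i) (Hmu i).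
have c_mu := (pc_compat_idmP HEL Hpc.1 Hmu').2 Hlam.
have HdEL := is_scocone_lcomp delta HEL.
have Hdl := is_pcnat_lwhisker delta Hpc.1.
have HEkappa i := is_nat_lwhisker E (Hk i).
(* E delta ~ id has components mu_i^-1 . E kappa_i, delta E ~ id has
   components kappa_i . (delta mu_i)^-1. *)
have Hth1 i := is_nat_comp (HEkappa i) (is_nat_inv (Hmu' i)).
have c_th1 := pc_compat_comp (is_pcnat_lwhisker E Hdl) (is_pcnat_idm HEL) Hpc.1
  HEkappa (fun i => is_nat_inv (Hmu' i))
  (pc_compat_lwhisker_idm E Hdl HL Hk Kc)
  (pc_compat_inv Hpc.1 (is_pcnat_idm HEL) Hmu' c_mu).
have [t1 [Ht1 _]] := (H2 C).2.1 (compF E delta) (idF C) _ Hth1 c_th1.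
have Hdmu i := is_nat_inv (is_nat_lwhisker delta (Hmu' i)).
have Hth2 i := is_nat_comp (Hdmu i) (Hk i).
have c_th2 := pc_compat_comp (is_pcnat_idm HdEL) Hdl (is_pcnat_idm HL) Hdmu Hk
  (pc_compat_inv Hdl (is_pcnat_idm HdEL) (fun i => is_nat_lwhisker delta (Hmu' i))
     (pc_compat_lwhisker_idm delta Hpc.1 HEL Hmu' c_mu)) Kc.
have [t2 [Ht2 _]] := (Hcol L).2.2.1 (compF delta E) (idF L) _ Hth2
  (pc_compat_idm_const HL Hth2 c_th2).
by exists E, t1, t2.
Qed.

Lemma comparison_equivalence_strictifiable :
  is_2colimit psi alphaC lambda -> is_scocone psi alphaL ->
  is_comparison psi alphaC lambda alphaL delta -> is_equivalence delta ->
  forall (D : Groupoid) (beta : forall i, Functor (G i) D) tau,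
    is_pcocone psi beta tau -> strictifiable psi beta tau.
Proof.
move=> [Hpc H2] HL [kappa [Hk Kc]] [E [eta [_ [Heta _]]]] D beta tau Hb.
have [chi [theta [Hth Tc]]] := (H2 D).1 beta tau Hb.
pose F := compF chi E.
have HFL := is_scocone_lcomp F HL.
have Hdl := is_pcnat_lwhisker delta Hpc.1.
have HFdl := is_pcnat_lwhisker F Hdl.
have Hchi_eta i : is_nat (compF F (compF delta (alphaC i))) (compF chi (alphaC i))
    (fun x => fmor chi (eta (fobj (alphaC i) x))) :=
  is_nat_lwhisker chi (is_nat_rwhisker (alphaC i) Heta).
have c_eta : pc_compat psi (fun i j h x => fmor F (fmor delta (lambda h x)))
    (fun i j h x => fmor chi (lambda h x))
    (fun i x => fmor chi (eta (fobj (alphaC i) x))) :=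
  pc_compat_lwhisker chi (is_pcnat_lwhisker (compF E delta) Hpc.1)
    (is_pcnat_lwhisker (idF C) Hpc.1) (fun i => is_nat_rwhisker (alphaC i) Heta)
    (pc_compat_nat Hpc.1 Heta).
(* rho_i = theta_i . chi (eta (alphaC_i)) and mu_i = chi E kappa_i . rho_i^-1 *)
have Hrho i := is_nat_comp (Hchi_eta i) (Hth i).
have c_rho := pc_compat_comp HFdl (is_pcnat_lwhisker chi Hpc.1) Hb.1 Hchi_eta Hth c_eta Tc.
have HFkappa i := is_nat_lwhisker F (Hk i).
have Hmu i := is_nat_comp (is_nat_inv (Hrho i)) (HFkappa i).
have c_mu := pc_compat_comp Hb.1 HFdl (is_pcnat_idm HFL) (fun i => is_nat_inv (Hrho i))
  HFkappa (pc_compat_inv HFdl Hb.1 Hrho c_rho) (pc_compat_lwhisker_idm F Hdl HL Hk Kc).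
do 2 eexists; split; first exact: Hmu.
by split; last exact: (pc_compat_idmP HFL Hb.1 Hmu).1 c_mu.
Qed.

End Comparison.

Theorem lemma4p2 (d : Order.disp_t) (I : porderType d) (G : I -> Groupoid)
  (psi : forall i j : I, (i <= j)%O -> Functor (G i) (G j))
  (C : Groupoid) (alphaC : forall i, Functor (G i) C)
  (lambda : forall i j : I, (i <= j)%O -> obj (G i) -> mor C)
  (L : Groupoid) (alphaL : forall i, Functor (G i) L)
  (delta : Functor C L) :
  is_diagram psi ->
  is_2colimit psi alphaC lambda ->
  is_colimit psi alphaL ->
  is_comparison psi alphaC lambda alphaL delta ->
  (is_equivalence delta <->
   forall (D : Groupoid) (beta : forall i, Functor (G i) D)
          (tau : forall i j : I, (i <= j)%O -> obj (G i) -> mor D),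
     is_pcocone psi beta tau ->
     exists (beta' : forall i, Functor (G i) D)
            (mu : forall i, obj (G i) -> mor D),
       (forall i, is_nat (beta i) (beta' i) (mu i)) /\
       (forall i j (h : (i <= j)%O), feq (beta' i) (compF (beta' j) (psi i j h))) /\
       (forall i j (h : (i <= j)%O) x,
          tau i j h x = cmp (ginv (mu i x)) (mu j (fobj (psi i j h) x)))).
Proof.
move=> _ H2 Hcol Hcmp; split.
  exact: comparison_equivalence_strictifiable H2 Hcol.1 Hcmp.
move=> Hst.
exact: strictifiable_comparison_equivalence H2 Hcol Hcmp (Hst C alphaC lambda H2.1).
Qed.
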